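(* There is an absolute constant $c>0$ such that for all positive integers $n,m$, every set $\mathcal{S}$, every relation $f\subseteq\{0,1\}^n\times\mathcal{S}$ and every partial Boolean function $g\subseteq\{0,1\}^m\times\{0,1\}$ with $g^{-1}(0)\neq\emptyset\neq g^{-1}(1)$, \[\mathrm{R}_{1/3}(f\circ g^n)\;\ge\; c\cdot\mathrm{R}_{4/9}(f)\cdot\chi(g).\]
   Context: A partial Boolean function is a relation $g\subseteq\{0,1\}^m\times\{0,1\}$. For $b\in\{0,1\}$, $g^{-1}(b)$ is the set of $x\in\{0,1\}^m$ with $(x,b)\in g$ and $(x,1-b)\notin g$; every string outside $g^{-1}(0)\cup g^{-1}(1)$ is related by $g$ to both $0$ and $1$. For a relation $h\subseteq\{0,1\}^k\times\mathcal{S}$ and $\epsilon\in[0,1/2)$, $\mathrm{R}_\epsilon(h)$ is the minimum worst-case number of queries (over inputs and internal randomness) of a randomized query algorithm $\mathcal{A}$ with $\Pr[(x,\mathcal{A}(x))\in h]\ge1-\epsilon$ for every $x\in\{0,1\}^k$. Composition: $f\circ g^n\subseteq(\{0,1\}^m)^n\times\mathcal{S}$ is defined by $(x,s)\in f\circ g^n$ iff there exists $b\in\{0,1\}^n$ with $(x^{(i)},b^{(i)})\in g$ for all $i$ and $(b,s)\in f$. A (deterministic) decision tree on $(\{0,1\}^m)^n$ is a rooted binary tree in which each internal vertex queries some input bit $x_i^{(j)}$ ($x=(x_1,\dots,x_n)$, $x_i=(x_i^{(1)},\dots,x_i^{(m)})\in\{0,1\}^m$) and has children $v_0,v_1$ corresponding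 to query outcomes $0,1$. Each vertex $v$ is identified with the subcube of inputs whose computation reaches $v$; write $v=\times_{i=1}^n v^{(i)}$ with $v^{(i)}\subseteq\{0,1\}^m$. For $n=1$, a decision tree $\mathcal{B}$ computes $g$ if its leaves are labelled by bits and for every valid input $x$ the label of the leaf reached equals the unique $b$ with $x\in g^{-1}(b)$. Process $\mathcal{P}$ on $(\mathcal{B},\mu_0,\mu_1,z)$, where $\mathcal{B}$ is a decision tree on $(\{0,1\}^m)^n$, $\mu_0,\mu_1$ are probability distributions on $\{0,1\}^m$ and $z\in\{0,1\}^n$: initialize $\mathsf{NQ}_k\gets1$ and $\mathsf{N}_k\gets0$ for all $k$, and $v\gets$ root. While $v$ is not a leaf, let $x_i^{(j)}$ be the bit queried at $v$ and, for $b\in\{0,1\}$, let $p_b=\Pr_{y\sim\mu_b}[y^{(j)}=0\mid y\in v^{(i)}]$. If $\mathsf{NQ}_i=1$: sample a fresh uniform real $r\in[0,1]$; if $r\le\min_b p_b$ set $v\gets v_0$; else if $r\ge\max_b p_b$ set $v\gets v_1$; otherwise set $\mathsf{NQ}_i\gets0$ and set $v\gets v_0$ if $r\le p_{z_i}$ and $v\gets v_1$ otherwise; in all three cases then set $\mathsf{N}_i\gets\mathsf{N}_i+1$. If $\mathsf{NQ}_i=0$: sample $y\sim\mu_{z_i}$ conditioned on $y\in v^{(i)}$ and set $v\gets v_{y^{(j)}}$. Conflict complexity: let $\mu_0,\mu_1$ be distributions supported on $g^{-1}(0)$ and $g^{-1}(1)$ respectively, and $\mathcal{B}$ a decision tree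 on $\{0,1\}^m$ (i.e. $n=1$) computing $g$. Run $\mathcal{P}$ on $(\mathcal{B},\mu_0,\mu_1,z)$ with $z\in\{0,1\}$ and let $\mathcal{N}$ be the final value of $\mathsf{N}_1$ (its distribution does not depend on $z$). Define $\chi(\mu_0,\mu_1,\mathcal{B})=\mathbb{E}[\mathcal{N}]$ and \[\chi(g)=\max_{\mu_0,\mu_1}\ \min_{\mathcal{B}}\ \chi(\mu_0,\mu_1,\mathcal{B}),\] the maximum over pairs of distributions supported on $g^{-1}(0)$ and $g^{-1}(1)$ respectively, the minimum over decision trees computing $g$. *)

From Stdlib Require Import Reals List Classical ClassicalEpsilon.
Import ListNotations.
Open Scope R_scope.

Inductive DT (Q L : Type) : Type :=
| Leaf : L -> DT Q L
| Node : Q -> DT Q L -> DT Q L -> DT Q L.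
Arguments Leaf {Q L} _.
Arguments Node {Q L} _ _ _.

Fixpoint run {X Q L : Type} (ask : X -> Q -> bool) (T : DT Q L) (x : X) : L :=
  match T with
  | Leaf l => l
  | Node q t0 t1 => if ask x q then run ask t1 x else run ask t0 x
  end.

Fixpoint nqueries {X Q L : Type} (ask : X -> Q -> bool) (T : DT Q L) (x : X) : nat :=
  match T with
  | Leaf _ => 0%nat
  | Node q t0 t1 => S (if ask x q then nqueries ask t1 x else nqueries ask t0 x)
  end.

Definition sumR (l : list R) : R := fold_right Rplus 0 l.
Definition ind (P : Prop) : R := if excluded_middle_informative P then 1 else 0.

(* a randomized algorithm = finitely supported probability distribution over
   deterministic decision trees *)
Definition RandAlg (Q L : Type) := list (R * DT Q L).

Definition is_prob_dist {A : Type} (D : list (R * A)) : Prop :=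
  Forall (fun p => 0 <= fst p) D /\ sumR (map fst D) = 1.

Definition success_prob {X Q S : Type} (ask : X -> Q -> bool)
  (h : X -> S -> Prop) (A : RandAlg Q S) (x : X) : R :=
  sumR (map (fun p => fst p * ind (h x (run ask (snd p) x))) A).

Definition achieves {X Q S : Type} (ask : X -> Q -> bool) (valid : X -> Prop)
  (h : X -> S -> Prop) (eps : R) (d : nat) : Prop :=
  exists A : RandAlg Q S,
    is_prob_dist A /\
    (forall p, In p A -> forall x, valid x -> (nqueries ask (snd p) x <= d)%nat) /\
    (forall x, valid x -> success_prob ask h A x >= 1 - eps).

Definition is_Rcomplexity {X Q S : Type} (ask : X -> Q -> bool) (valid : X -> Prop)
  (h : X -> S -> Prop) (eps : R) (r : nat) : Prop :=
  achieves ask valid h eps r /\ (forall d, achieves ask valid h eps d -> (r <= d)%nat).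

(* {0,1}^k = lists of booleans of length k; position i is queried via nth *)
Definition ask_bits (x : list bool) (i : nat) : bool := nth i x false.
Definition bits (k : nat) (x : list bool) : Prop := length x = k.

(* ({0,1}^m)^n = lists of n lists of length m; query (i,j) = x_i^(j) *)
Definition ask_blocks (x : list (list bool)) (q : nat * nat) : bool :=
  nth (snd q) (nth (fst q) x nil) false.
Definition blocks (n m : nat) (x : list (list bool)) : Prop :=
  length x = n /\ Forall (fun y => length y = m) x.

Fixpoint allbits (k : nat) : list (list bool) :=
  match k with
  | O => [nil]
  | S k' => flat_map (fun y => [false :: y; true :: y]) (allbits k')
  end.

Definition ginv (g : list bool -> bool -> Prop) (b : bool) (x : list bool) : Prop :=
  g x b /\ ~ g x (negb b).

(* g is a partial Boolean function on {0,1}^m: every string outside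
   g^{-1}(0) u g^{-1}(1) is related to both 0 and 1 *)
Definition partial_bool (g : list bool -> bool -> Prop) (m : nat) : Prop :=
  forall x, length x = m -> ~ ginv g false x -> ~ ginv g true x -> g x false /\ g x true.

Definition compose {S : Type} (n : nat) (f : list bool -> S -> Prop)
  (g : list bool -> bool -> Prop) (x : list (list bool)) (s : S) : Prop :=
  exists b : list bool, length b = n /\
    (forall i, (i < n)%nat -> g (nth i x nil) (nth i b false)) /\ f b s.

Definition mass (m : nat) (mu : list bool -> R) (C : list bool -> Prop) : R :=
  sumR (map (fun y => mu y * ind (C y)) (allbits m)).

(* Pr_{y ~ mu}[y^(j) = 0 | y in C]  (convention: 0 if mu(C) = 0) *)
Definition cond_prob0 (m : nat) (mu : list bool -> R) (C : list bool -> Prop) (j : nat) : R :=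
  let den := mass m mu C in
  if Req_EM_T den 0 then 0
  else mass m mu (fun y => C y /\ nth j y false = false) / den.

(* Expected final value of N_1 for process P on (T, mu0, mu1, z), started at
   the vertex whose subcube is C with current flag NQ_1 = nq (n = 1).
   The uniform real r is integrated out: from a vertex querying x^(j),
   with lo = min_b p_b, hi = max_b p_b:
     NQ=1: r<=lo (prob lo) -> v0, NQ stays 1;  r>=hi (prob 1-hi) -> v1, NQ 1;
           lo<r<=p_z (prob p_z-lo) -> v0, NQ:=0;  p_z<r<hi (prob hi-p_z) -> v1, NQ:=0;
           in all cases N increases by 1.
     NQ=0: y ~ mu_z | v, go to v0 with prob p_z, v1 with prob 1-p_z; N unchanged. *)
Fixpoint EN (m : nat) (mu0 mu1 : list bool -> R) (z : bool)
  (C : list bool -> Prop) (T : DT nat bool) (nq : bool) : R :=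
  match T with
  | Leaf _ => 0
  | Node j t0 t1 =>
      let C0 := fun y => C y /\ nth j y false = false in
      let C1 := fun y => C y /\ nth j y false = true in
      let p0 := cond_prob0 m mu0 C j in
      let p1 := cond_prob0 m mu1 C j in
      let pz := if z then p1 else p0 in
      let lo := Rmin p0 p1 in
      let hi := Rmax p0 p1 in
      if nq then
        1 + lo * EN m mu0 mu1 z C0 t0 true
          + (1 - hi) * EN m mu0 mu1 z C1 t1 true
          + (pz - lo) * EN m mu0 mu1 z C0 t0 false
          + (hi - pz) * EN m mu0 mu1 z C1 t1 false
      else
        pz * EN m mu0 mu1 z C0 t0 false + (1 - pz) * EN m mu0 mu1 z C1 t1 false
  end.

(* chi(mu0, mu1, B) = E[N], process run with z = 0 (distribution of N is
   independent of z) from the root (whole cube), NQ_1 = 1. *)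
Definition chi_val (m : nat) (mu0 mu1 : list bool -> R) (B : DT nat bool) : R :=
  EN m mu0 mu1 false (fun _ => True) B true.

Definition computes (g : list bool -> bool -> Prop) (m : nat) (B : DT nat bool) : Prop :=
  forall x b, length x = m -> ginv g b x -> run ask_bits B x = b.

Definition dist_on_ginv (g : list bool -> bool -> Prop) (m : nat) (b : bool)
  (mu : list bool -> R) : Prop :=
  (forall y, length y = m -> 0 <= mu y) /\
  sumR (map mu (allbits m)) = 1 /\
  (forall y, length y = m -> mu y <> 0 -> ginv g b y).

Definition is_glb (P : R -> Prop) (x : R) : Prop :=
  (forall y, P y -> x <= y) /\ (forall z, (forall y, P y -> z <= y) -> z <= x).

(* chi(g) = max_{mu0,mu1} min_B chi(mu0,mu1,B), taken as sup / inf *)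
Definition is_conflict_complexity (g : list bool -> bool -> Prop) (m : nat) (c : R) : Prop :=
  is_lub (fun r => exists mu0 mu1,
            dist_on_ginv g m false mu0 /\ dist_on_ginv g m true mu1 /\
            is_glb (fun v => exists B, computes g m B /\ v = chi_val m mu0 mu1 B) r) c.

(** The lower bound is proved by simulation.  Fix distributions [mu0, mu1]
    that nearly attain [chi(g)] and an algorithm [A] for [f o g^n] making at
    most [r1] queries.  On an input [z] of [f], run [A] on blocks [x_i] sampled
    from [mu_{z_i}], revealing a block's bits lazily by the coupling of
    process [P]: a query to block [i] is answered without knowing [z_i] until
    the first "conflict", at which point [z_i] is queried.  Projecting onto a
    single block turns the run into a decision tree for [g]; grafting
    near-optimal trees below its leaves shows that the expected number of
    queries charged to block [i] is at least [chi(g)] times the probability of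
    a conflict there, up to an arbitrarily small error.  Summing over blocks,
    the expected number of conflicts is at most about [r1 / chi(g)], so
    truncating the simulation after [9 r1 / chi(g)] queries to [z] loses at
    most [1/9] success probability (Markov), giving error [1/3 + 1/9 = 4/9]. *)

From Stdlib Require Import Reals List Lra Lia Classical ClassicalEpsilon ZArith.
Import ListNotations.
Open Scope R_scope.

Lemma ind_T (P : Prop) : P -> ind P = 1.
Proof. intro H; unfold ind; destruct (excluded_middle_informative P); tauto. Qed.

Lemma ind_F (P : Prop) : ~ P -> ind P = 0.
Proof. intro H; unfold ind; destruct (excluded_middle_informative P); tauto. Qed.

Lemma ind_iff (P Q : Prop) : (P <-> Q) -> ind P = ind Q.
Proof.
  intro H; destruct (classic P) as [p|p].
  - rewrite !ind_T; tauto.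
  - rewrite !ind_F; tauto.
Qed.

Lemma ind_bounds (P : Prop) : 0 <= ind P <= 1.
Proof. destruct (classic P); [rewrite ind_T|rewrite ind_F]; auto; lra. Qed.

Lemma ind_and (P Q : Prop) : ind P * ind Q = ind (P /\ Q).
Proof.
  destruct (classic P); destruct (classic Q);
    [rewrite !ind_T | rewrite (ind_F Q), (ind_F (P /\ Q))
    | rewrite (ind_F P), (ind_F (P /\ Q)) | rewrite (ind_F P), (ind_F (P /\ Q))];
    tauto || ring.
Qed.

Lemma ind_split_bool (P : Prop) (b : bool) :
  ind P = ind (P /\ b = false) + ind (P /\ b = true).
Proof.
  destruct b.
  - rewrite (ind_iff (P /\ true = false) False), (ind_iff (P /\ true = true) P)
      by (split; [intros []; discriminate|tauto] || tauto).
    rewrite (ind_F False); auto; ring.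
  - rewrite (ind_iff (P /\ false = true) False), (ind_iff (P /\ false = false) P)
      by (split; [intros []; discriminate|tauto] || tauto).
    rewrite (ind_F False); auto; ring.
Qed.

Lemma sumR_app (l1 l2 : list R) : sumR (l1 ++ l2) = sumR l1 + sumR l2.
Proof. induction l1; simpl; [lra|rewrite IHl1; lra]. Qed.

Lemma sumR_scale {A} (c : R) (f : A -> R) (l : list A) :
  sumR (map (fun x => c * f x) l) = c * sumR (map f l).
Proof. induction l; simpl; [lra|rewrite IHl; lra]. Qed.

Lemma sumR_plus {A} (f h : A -> R) (l : list A) :
  sumR (map (fun x => f x + h x) l) = sumR (map f l) + sumR (map h l).
Proof. induction l; simpl; [lra|rewrite IHl; lra]. Qed.

Lemma sumR_ext {A} (f h : A -> R) (l : list A) :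
  (forall x, In x l -> f x = h x) -> sumR (map f l) = sumR (map h l).
Proof. induction l; simpl; intros H; [lra|]. rewrite H, IHl; auto. Qed.

Lemma sumR_le {A} (f h : A -> R) (l : list A) :
  (forall x, In x l -> f x <= h x) -> sumR (map f l) <= sumR (map h l).
Proof.
  induction l; simpl; intros H; [lra|].
  pose proof (H a (or_introl eq_refl)); pose proof (IHl (fun x h => H x (or_intror h))); lra.
Qed.

Lemma sumR_zero {A} (l : list A) : sumR (map (fun _ => 0) l) = 0.
Proof. induction l; simpl; lra. Qed.

Lemma sumR_nonneg {A} (f : A -> R) (l : list A) :
  (forall x, In x l -> 0 <= f x) -> 0 <= sumR (map f l).
Proof. intro H; rewrite <- (sumR_zero l); apply sumR_le; auto. Qed.

Lemma sumR_flat_map {A B} (f : B -> R) (h : A -> list B) (l : list A) :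
  sumR (map f (flat_map h l)) = sumR (map (fun x => sumR (map f (h x))) l).
Proof. induction l; simpl; auto. rewrite map_app, sumR_app, IHl; reflexivity. Qed.

Lemma sumR_swap {A B} (f : A -> B -> R) (la : list A) (lb : list B) :
  sumR (map (fun a => sumR (map (fun b => f a b) lb)) la) =
  sumR (map (fun b => sumR (map (fun a => f a b) la)) lb).
Proof.
  induction la; simpl.
  - rewrite sumR_zero; reflexivity.
  - rewrite IHla, <- sumR_plus; reflexivity.
Qed.

Lemma allbits_length (k : nat) (y : list bool) : In y (allbits k) -> length y = k.
Proof.
  revert y; induction k; simpl; intros y H.
  - destruct H as [<-|[]]; reflexivity.
  - apply in_flat_map in H as [y' [Hy' H]].
    destruct H as [<-|[<-|[]]]; simpl; f_equal; auto.
Qed.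

Definition cube0 (C : list bool -> Prop) (j : nat) : list bool -> Prop :=
  fun y => C y /\ nth j y false = false.
Definition cube1 (C : list bool -> Prop) (j : nat) : list bool -> Prop :=
  fun y => C y /\ nth j y false = true.

Definition nonneg_on (m : nat) (mu : list bool -> R) : Prop :=
  forall y, length y = m -> 0 <= mu y.

Lemma dist_nonneg g m b mu : dist_on_ginv g m b mu -> nonneg_on m mu.
Proof. intros [H _]; exact H. Qed.

Section Mass.
Variables (m : nat) (mu : list bool -> R).
Hypothesis mu_ge0 : nonneg_on m mu.

Lemma mass_ge0 C : 0 <= mass m mu C.
Proof.
  unfold mass; apply sumR_nonneg; intros y Hy.
  pose proof (mu_ge0 y (allbits_length _ _ Hy)); pose proof (ind_bounds (C y)); nra.
Qed.

Lemma mass_split C j : mass m mu C = mass m mu (cube0 C j) + mass m mu (cube1 C j).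
Proof.
  unfold mass, cube0, cube1; rewrite <- sumR_plus; apply sumR_ext; intros y _.
  rewrite (ind_split_bool (C y) (nth j y false)); ring.
Qed.

Lemma cond_prob0_bounds C j : 0 <= cond_prob0 m mu C j <= 1.
Proof.
  unfold cond_prob0; simpl.
  destruct (Req_EM_T (mass m mu C) 0) as [e|e]; [lra|].
  pose proof (mass_split C j); pose proof (mass_ge0 (cube0 C j)); pose proof (mass_ge0 (cube1 C j)).
  fold (cube0 C j); assert (0 < mass m mu C) by lra.
  split; [apply Rmult_le_pos; [lra|left; apply Rinv_0_lt_compat; lra]|].
  apply (Rmult_le_reg_r (mass m mu C)); [lra|].
  unfold Rdiv; rewrite Rmult_assoc, Rinv_l; lra.
Qed.

Lemma mass_cube0 C j : mass m mu (cube0 C j) = cond_prob0 m mu C j * mass m mu C.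
Proof.
  pose proof (mass_split C j); pose proof (mass_ge0 (cube0 C j)); pose proof (mass_ge0 (cube1 C j)).
  unfold cond_prob0; simpl; fold (cube0 C j).
  destruct (Req_EM_T (mass m mu C) 0) as [e|e]; [lra|field; auto].
Qed.

Lemma mass_cube1 C j : mass m mu (cube1 C j) = (1 - cond_prob0 m mu C j) * mass m mu C.
Proof. pose proof (mass_split C j); pose proof (mass_cube0 C j); lra. Qed.

Lemma mass_whole : sumR (map mu (allbits m)) = 1 -> mass m mu (fun _ => True) = 1.
Proof.
  intro H; rewrite <- H; unfold mass; apply sumR_ext; intros; rewrite ind_T; auto; ring.
Qed.

Definition cond_dist (C : list bool -> Prop) : list bool -> R :=
  fun y => mu y * ind (C y) / mass m mu C.

Lemma mass_cond_dist C D D' : 0 < mass m mu C -> (forall y, D' y <-> C y /\ D y) ->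
  mass m (cond_dist C) D = mass m mu D' / mass m mu C.
Proof.
  intros HM HD; unfold cond_dist, Rdiv; rewrite Rmult_comm.
  unfold mass; rewrite <- sumR_scale; apply sumR_ext; intros y _.
  rewrite (ind_iff _ _ (HD y)), <- ind_and; ring.
Qed.

Lemma cond_prob0_cond_dist C D D' j : 0 < mass m mu C -> (forall y, D' y <-> C y /\ D y) ->
  cond_prob0 m (cond_dist C) D j = cond_prob0 m mu D' j.
Proof.
  intros HM HD; unfold cond_prob0; simpl.
  rewrite (mass_cond_dist C D D' HM HD),
    (mass_cond_dist C (fun y => D y /\ nth j y false = false)
                      (fun y => D' y /\ nth j y false = false) HM)
    by (intro y; rewrite HD; tauto).
  destruct (Req_EM_T (mass m mu D' / mass m mu C) 0) as [e|e];
  destruct (Req_EM_T (mass m mu D') 0) as [e'|e'].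
  - reflexivity.
  - exfalso; apply e'; apply (Rmult_eq_reg_r (/ mass m mu C)).
    + unfold Rdiv in e; rewrite e; ring.
    + apply Rinv_neq_0_compat; lra.
  - exfalso; apply e; rewrite e'; unfold Rdiv; ring.
  - field; split; lra.
Qed.

End Mass.

Lemma cond_dist_on_ginv g m b mu C : dist_on_ginv g m b mu -> 0 < mass m mu C ->
  dist_on_ginv g m b (cond_dist m mu C).
Proof.
  intros [Hn [Hs Hg]] HM; split; [|split].
  - intros y Hy; unfold cond_dist; pose proof (Hn y Hy); pose proof (ind_bounds (C y)).
    apply Rmult_le_pos; [nra|left; apply Rinv_0_lt_compat; auto].
  - unfold cond_dist, Rdiv.
    rewrite (sumR_ext _ (fun y => / mass m mu C * (mu y * ind (C y)))) by (intros; ring).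
    rewrite sumR_scale; unfold mass in *; field; lra.
  - intros y Hy Hnz; apply Hg; auto.
    intro e; apply Hnz; unfold cond_dist; rewrite e; unfold Rdiv; ring.
Qed.

(** * Process [P] on a single block *)

Section SingleBlock.
Variables (m : nat) (mu0 mu1 : list bool -> R).
Hypotheses (mu0_ge0 : nonneg_on m mu0) (mu1_ge0 : nonneg_on m mu1).

Definition pmin (C : list bool -> Prop) (j : nat) : R :=
  Rmin (cond_prob0 m mu0 C j) (cond_prob0 m mu1 C j).
Definition pmax (C : list bool -> Prop) (j : nat) : R :=
  Rmax (cond_prob0 m mu0 C j) (cond_prob0 m mu1 C j).

Lemma pmin_pmax_bounds C j : 0 <= pmin C j <= pmax C j /\ pmax C j <= 1.
Proof.
  pose proof (cond_prob0_bounds m mu0 mu0_ge0 C j); pose proof (cond_prob0_bounds m mu1 mu1_ge0 C j).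
  unfold pmin, pmax, Rmin, Rmax; destruct Rle_dec; lra.
Qed.

(* [E[N]] and [Pr[NQ drops to 0]] for process [P] started with [NQ = 1]. *)
Fixpoint queries_to_conflict (C : list bool -> Prop) (T : DT nat bool) : R :=
  match T with
  | Leaf _ => 0
  | Node j t0 t1 => 1 + pmin C j * queries_to_conflict (cube0 C j) t0
                      + (1 - pmax C j) * queries_to_conflict (cube1 C j) t1
  end.

Fixpoint conflict_prob (C : list bool -> Prop) (T : DT nat bool) : R :=
  match T with
  | Leaf _ => 0
  | Node j t0 t1 => (pmax C j - pmin C j)
                    + pmin C j * conflict_prob (cube0 C j) t0
                    + (1 - pmax C j) * conflict_prob (cube1 C j) t1
  end.

Lemma EN_after_conflict z T C : EN m mu0 mu1 z C T false = 0.
Proof. revert C; induction T; intro C; simpl; auto. rewrite IHT1, IHT2; ring. Qed.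

Lemma EN_queries_to_conflict z T C : EN m mu0 mu1 z C T true = queries_to_conflict C T.
Proof.
  revert C; induction T; intro C; simpl; auto.
  rewrite IHT1, IHT2, !EN_after_conflict; unfold pmin, pmax, cube0, cube1; ring.
Qed.

Lemma queries_to_conflict_ge0 T C : 0 <= queries_to_conflict C T.
Proof.
  revert C; induction T; intro C; simpl; [lra|].
  pose proof (pmin_pmax_bounds C q); pose proof (IHT1 (cube0 C q)); pose proof (IHT2 (cube1 C q)).
  nra.
Qed.

Lemma conflict_prob_bounds T C : 0 <= conflict_prob C T <= 1.
Proof.
  revert C; induction T; intro C; simpl; [lra|].
  pose proof (pmin_pmax_bounds C q); pose proof (IHT1 (cube0 C q)); pose proof (IHT2 (cube1 C q)).
  nra.
Qed.

Definition both_positive (C : list bool -> Prop) : Prop := 0 < mass m mu0 C /\ 0 < mass m mu1 C.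

Lemma both_positive_cube0 C j : both_positive C -> 0 < pmin C j -> both_positive (cube0 C j).
Proof.
  intros [c0 c1]; unfold pmin, Rmin; intro Hp.
  unfold both_positive; rewrite !mass_cube0 by auto.
  destruct Rle_dec; split; apply Rmult_lt_0_compat; lra.
Qed.

Lemma both_positive_cube1 C j : both_positive C -> pmax C j < 1 -> both_positive (cube1 C j).
Proof.
  intros [c0 c1]; unfold pmax, Rmax; intro Hp.
  unfold both_positive; rewrite !mass_cube1 by auto.
  destruct Rle_dec; split; apply Rmult_lt_0_compat; lra.
Qed.

Fixpoint graft (sel : (list bool -> Prop) -> DT nat bool) (C : list bool -> Prop) (T : DT nat bool)
  : DT nat bool :=
  match T with
  | Leaf _ => sel C
  | Node j t0 t1 => Node j (graft sel (cube0 C j) t0) (graft sel (cube1 C j) t1)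
  end.

Lemma graft_computes g sel : (forall D, computes g m (sel D)) ->
  forall T C, computes g m (graft sel C T).
Proof.
  intros Hs T; induction T; intro C; simpl; auto.
  intros x b Hx Hg; simpl; destruct (ask_bits x q); [apply IHT2|apply IHT1]; auto.
Qed.

(* A conflict stops the count, so the grafted trees are reached with
   probability [1 - conflict_prob]. *)
Lemma queries_to_conflict_graft sel K :
  (forall D, both_positive D -> queries_to_conflict D (sel D) <= K) ->
  forall T C, both_positive C ->
  queries_to_conflict C (graft sel C T) <= queries_to_conflict C T + (1 - conflict_prob C T) * K.
Proof.
  intros Hs T; induction T; intros C HC; simpl; [specialize (Hs C HC); lra|].
  pose proof (pmin_pmax_bounds C q) as [[Hl Hlh] Hh].
  assert (A0 : pmin C q * queries_to_conflict (cube0 C q) (graft sel (cube0 C q) T1) <=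
               pmin C q * (queries_to_conflict (cube0 C q) T1 + (1 - conflict_prob (cube0 C q) T1) * K)).
  { destruct Hl as [Hl|Hl]; [|rewrite <- Hl; lra].
    apply Rmult_le_compat_l; [lra|]; apply IHT1, both_positive_cube0; auto. }
  assert (A1 : (1 - pmax C q) * queries_to_conflict (cube1 C q) (graft sel (cube1 C q) T2) <=
               (1 - pmax C q) * (queries_to_conflict (cube1 C q) T2 + (1 - conflict_prob (cube1 C q) T2) * K)).
  { destruct Hh as [Hh|Hh]; [|rewrite Hh; lra].
    apply Rmult_le_compat_l; [lra|]; apply IHT2, both_positive_cube1; auto. }
  lra.
Qed.

End SingleBlock.

Lemma queries_to_conflict_cond_dist m mu0 mu1 C T :
  0 < mass m mu0 C -> 0 < mass m mu1 C ->
  forall D D', (forall y, D' y <-> C y /\ D y) ->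
  queries_to_conflict m mu0 mu1 D' T =
  queries_to_conflict m (cond_dist m mu0 C) (cond_dist m mu1 C) D T.
Proof.
  intros H0 H1; induction T; intros D D' HD; simpl; auto.
  unfold pmin, pmax.
  rewrite (cond_prob0_cond_dist m mu0 C D D' q H0 HD), (cond_prob0_cond_dist m mu1 C D D' q H1 HD).
  rewrite (IHT1 (cube0 D q) (cube0 D' q)), (IHT2 (cube1 D q) (cube1 D' q)); auto;
    intro y; unfold cube0, cube1; rewrite HD; tauto.
Qed.

(** * Near-optimal trees for [g] *)

Lemma glb_exists (P : R -> Prop) : (exists v, P v) -> (exists lb, forall v, P v -> lb <= v) ->
  exists r, is_glb P r.
Proof.
  intros [v Hv] [lb Hlb].
  destruct (completeness (fun x => P (- x))) as [l [Hl1 Hl2]].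
  - exists (- lb); intros x Hx; specialize (Hlb _ Hx); lra.
  - exists (- v); rewrite Ropp_involutive; auto.
  - exists (- l); split.
    + intros y Hy; assert (- y <= l) by (apply Hl1; rewrite Ropp_involutive; auto); lra.
    + intros z Hz; assert (l <= - z); [|lra].
      apply Hl2; intros x Hx; specialize (Hz _ Hx); lra.
Qed.

Lemma glb_nonempty (P : R -> Prop) r : is_glb P r -> exists v, P v.
Proof.
  intros [H1 H2]; apply NNPP; intro Hn.
  assert (r + 1 <= r) by (apply H2; intros y Hy; exfalso; apply Hn; eauto); lra.
Qed.

Lemma lub_approx (P : R -> Prop) r eps : is_lub P r -> 0 < eps -> exists v, P v /\ r - eps < v.
Proof.
  intros [H1 H2] He; apply NNPP; intro Hn.
  assert (r <= r - eps); [|lra].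
  apply H2; intros y Hy; apply Rnot_lt_le; intro; apply Hn; eauto.
Qed.

Definition conflict_excess m mu0 mu1 (chig : R) (C : list bool -> Prop) (T : DT nat bool) : R :=
  queries_to_conflict m mu0 mu1 C T - chig * conflict_prob m mu0 mu1 C T.

Lemma conflict_excess_node m mu0 mu1 chig C j T0 T1 :
  conflict_excess m mu0 mu1 chig C (Node j T0 T1) =
  1 - chig * (pmax m mu0 mu1 C j - pmin m mu0 mu1 C j)
  + pmin m mu0 mu1 C j * conflict_excess m mu0 mu1 chig (cube0 C j) T0
  + (1 - pmax m mu0 mu1 C j) * conflict_excess m mu0 mu1 chig (cube1 C j) T1.
Proof. unfold conflict_excess; simpl; ring. Qed.

Section NearOptimal.
Variables (g : list bool -> bool -> Prop) (m : nat) (mu0 mu1 : list bool -> R) (chig eps : R).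
Hypotheses (mu0_dist : dist_on_ginv g m false mu0) (mu1_dist : dist_on_ginv g m true mu1).
Hypothesis eps_gt0 : 0 < eps.
Hypothesis mu_near_opt : forall B, computes g m B -> chig - eps <= chi_val m mu0 mu1 B.
Hypothesis chig_ub : forall nu0 nu1 r,
  dist_on_ginv g m false nu0 -> dist_on_ginv g m true nu1 ->
  is_glb (fun v => exists B, computes g m B /\ v = chi_val m nu0 nu1 B) r -> r <= chig.
Hypothesis g_computable : exists B, computes g m B.

(* Conditioned on a subcube [D] of positive mass, [mu0, mu1] are again a
   candidate pair, so some tree does at most [chig + eps] there. *)
Lemma near_optimal_subtree D : exists T, computes g m T /\
  (both_positive m mu0 mu1 D -> queries_to_conflict m mu0 mu1 D T <= chig + eps).
Proof.
  destruct (classic (both_positive m mu0 mu1 D)) as [[D0p D1p]|HD];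
    [|destruct g_computable as [B HB]; exists B; tauto].
  apply NNPP; intro Hn.
  assert (Hall : forall T, computes g m T -> chig + eps < queries_to_conflict m mu0 mu1 D T).
  { intros T HT; apply Rnot_le_lt; intro; apply Hn; exists T; auto. }
  set (nu0 := cond_dist m mu0 D); set (nu1 := cond_dist m mu1 D).
  assert (Hval : forall B, chi_val m nu0 nu1 B = queries_to_conflict m mu0 mu1 D B).
  { intro B; unfold chi_val; rewrite EN_queries_to_conflict.
    symmetry; apply queries_to_conflict_cond_dist; auto; intro y; tauto. }
  destruct (glb_exists (fun v => exists B, computes g m B /\ v = chi_val m nu0 nu1 B)) as [r Hr].
  - destruct g_computable as [B HB]; eauto.
  - exists (chig + eps); intros v [B [HB ->]]; rewrite Hval; left; auto.
  - assert (r <= chig) by (apply (chig_ub nu0 nu1 r); auto; apply cond_dist_on_ginv; auto).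
    assert (chig + eps <= r); [|lra].
    apply (proj2 Hr); intros v [B [HB ->]]; rewrite Hval; left; auto.
Qed.

Lemma conflict_excess_lower_bound T : - 2 * eps <= conflict_excess m mu0 mu1 chig (fun _ => True) T.
Proof.
  destruct (choice _ near_optimal_subtree) as [sel Hsel].
  pose proof (dist_nonneg _ _ _ _ mu0_dist) as N0; pose proof (dist_nonneg _ _ _ _ mu1_dist) as N1.
  assert (Hr : both_positive m mu0 mu1 (fun _ => True)).
  { destruct mu0_dist as [_ [s0 _]]; destruct mu1_dist as [_ [s1 _]].
    split; rewrite mass_whole; auto; lra. }
  pose proof (queries_to_conflict_graft m mu0 mu1 N0 N1 sel (chig + eps)
                (fun D h => proj2 (Hsel D) h) T _ Hr) as Hgraft.
  pose proof (mu_near_opt _ (graft_computes m g sel (fun D => proj1 (Hsel D)) T (fun _ => True)))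
    as Hopt.
  unfold chi_val in Hopt; rewrite EN_queries_to_conflict in Hopt.
  pose proof (conflict_prob_bounds m mu0 mu1 N0 N1 T (fun _ => True)).
  unfold conflict_excess.
  set (a := conflict_prob m mu0 mu1 (fun _ => True) T) in *.
  assert (0 <= a * eps) by (apply Rmult_le_pos; lra).
  nra.
Qed.

End NearOptimal.

(** * Product distributions on blocks *)

Fixpoint prodR (n : nat) (h : nat -> R) : R :=
  match n with O => 1 | S n' => h O * prodR n' (fun i => h (S i)) end.

Lemma prodR_ext n : forall h h', (forall i, (i < n)%nat -> h i = h' i) -> prodR n h = prodR n h'.
Proof.
  induction n; intros h h' H; simpl; auto.
  rewrite H by lia; f_equal; apply IHn; intros; apply H; lia.
Qed.

Lemma prodR_replace n : forall h h' i c, (i < n)%nat -> h' i = c * h i ->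
  (forall k, k <> i -> h' k = h k) -> prodR n h' = c * prodR n h.
Proof.
  induction n; intros h h' i c Hi Hc Hk; [lia|simpl].
  destruct i.
  - rewrite Hc, (prodR_ext n (fun i => h' (S i)) (fun i => h (S i))); [ring|].
    intros; apply Hk; lia.
  - rewrite (Hk 0%nat) by lia.
    rewrite (IHn (fun k => h (S k)) (fun k => h' (S k)) i c); [ring|lia|auto|].
    intros k hk; apply Hk; lia.
Qed.

Lemma prodR_ge0 n : forall h, (forall i, (i < n)%nat -> 0 <= h i) -> 0 <= prodR n h.
Proof.
  induction n; intros h H; simpl; [lra|].
  apply Rmult_le_pos; [apply H; lia|apply IHn; intros; apply H; lia].
Qed.

Lemma prodR_neq0 n : forall h, prodR n h <> 0 -> forall i, (i < n)%nat -> h i <> 0.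
Proof.
  induction n; intros h H i Hi; [lia|simpl in H].
  destruct i.
  - intro e; apply H; rewrite e; ring.
  - apply (IHn (fun k => h (S k))); [|lia]; intro e; apply H; rewrite e; ring.
Qed.

Lemma prodR_one n : prodR n (fun _ => 1) = 1.
Proof. induction n; simpl; auto. rewrite IHn; ring. Qed.

Fixpoint allblocks (m n : nat) : list (list (list bool)) :=
  match n with
  | O => [nil]
  | S n' => flat_map (fun y => map (cons y) (allblocks m n')) (allbits m)
  end.

Lemma allblocks_blocks m n x : In x (allblocks m n) -> blocks n m x.
Proof.
  revert x; induction n; simpl; intros x H.
  - destruct H as [<-|[]]; split; auto.
  - apply in_flat_map in H as [y [Hy H]]; apply in_map_iff in H as [x' [<- Hx']].
    destruct (IHn x' Hx') as [l F]; split; simpl; auto.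
    constructor; auto; apply allbits_length; auto.
Qed.

Lemma sumR_prodR_allblocks m n : forall h : nat -> list bool -> R,
  sumR (map (fun x => prodR n (fun i => h i (nth i x nil))) (allblocks m n))
  = prodR n (fun i => sumR (map (h i) (allbits m))).
Proof.
  induction n; intro h; simpl; [ring|].
  rewrite sumR_flat_map.
  rewrite (sumR_ext _ (fun y => prodR n (fun i => sumR (map (h (S i)) (allbits m))) * h O y)).
  - rewrite sumR_scale; ring.
  - intros y _; rewrite map_map; simpl.
    rewrite sumR_scale, (IHn (fun i => h (S i))); ring.
Qed.

Fixpoint sumN (N : nat) (h : nat -> R) : R :=
  match N with O => 0 | S N' => sumN N' h + h N' end.

Lemma sumN_ext N h h' : (forall i, h i = h' i) -> sumN N h = sumN N h'.
Proof. intro H; induction N; simpl; auto. rewrite IHN, H; auto. Qed.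

Lemma sumN_delta N i v : sumN N (fun i0 => if Nat.eqb i i0 then v else 0) = if Nat.ltb i N then v else 0.
Proof.
  induction N; cbn [sumN].
  - destruct i; simpl; auto.
  - rewrite IHN; destruct (Nat.ltb_spec i N); destruct (Nat.eqb_spec i N);
      destruct (Nat.ltb_spec i (S N)); try lia; lra.
Qed.

Lemma sumN_ge N h a : (forall i, (i < N)%nat -> a <= h i) -> INR N * a <= sumN N h.
Proof.
  induction N; intro H; cbn [sumN]; [simpl; lra|].
  rewrite S_INR; pose proof (H N (Nat.lt_succ_diag_r N)).
  assert (INR N * a <= sumN N h) by (apply IHN; intros; apply H; lia); lra.
Qed.

Definition scale {Q L} (c : R) (D : RandAlg Q L) : RandAlg Q L :=
  map (fun p => (c * fst p, snd p)) D.

Definition comb {L} (i : nat) (D0 D1 : RandAlg nat L) : RandAlg nat L :=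
  flat_map (fun p0 => map (fun p1 => (fst p0 * fst p1, Node i (snd p0) (snd p1))) D1) D0.

Definition weights_ok_within {L} (D : RandAlg nat L) (k : nat) : Prop :=
  forall p, In p D -> 0 <= fst p /\ forall z, (nqueries ask_bits (snd p) z <= k)%nat.

Lemma wsum_app {Q L} (D1 D2 : RandAlg Q L) :
  sumR (map fst (D1 ++ D2)) = sumR (map fst D1) + sumR (map fst D2).
Proof. rewrite map_app, sumR_app; auto. Qed.

Lemma wsum_scale {Q L} c (D : RandAlg Q L) : sumR (map fst (scale c D)) = c * sumR (map fst D).
Proof. unfold scale; rewrite map_map; apply sumR_scale. Qed.

Lemma wsum_comb {L} i (D0 D1 : RandAlg nat L) :
  sumR (map fst (comb i D0 D1)) = sumR (map fst D0) * sumR (map fst D1).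
Proof.
  unfold comb; rewrite sumR_flat_map.
  rewrite (sumR_ext _ (fun p0 => sumR (map fst D1) * fst p0)).
  - rewrite sumR_scale; ring.
  - intros p0 _; rewrite map_map; simpl; rewrite sumR_scale; ring.
Qed.

Lemma in_scale {Q L} c (D : RandAlg Q L) p :
  In p (scale c D) -> exists p', In p' D /\ p = (c * fst p', snd p').
Proof. unfold scale; intro H; apply in_map_iff in H as [p' [<- Hp]]; eauto. Qed.

Lemma weights_ok_app {L} (D1 D2 : RandAlg nat L) k :
  weights_ok_within D1 k -> weights_ok_within D2 k -> weights_ok_within (D1 ++ D2) k.
Proof. intros H1 H2 p Hp; apply in_app_or in Hp as [Hp|Hp]; auto. Qed.

Lemma weights_ok_scale {L} c (D : RandAlg nat L) k :
  0 <= c -> weights_ok_within D k -> weights_ok_within (scale c D) k.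
Proof.
  intros Hc HD p Hp; apply in_scale in Hp as [p' [Hp' ->]]; simpl.
  destruct (HD p' Hp'); split; auto; apply Rmult_le_pos; auto.
Qed.

Lemma weights_ok_comb {L} i (D0 D1 : RandAlg nat L) k :
  weights_ok_within D0 k -> weights_ok_within D1 k -> weights_ok_within (comb i D0 D1) (S k).
Proof.
  intros H0 H1 p Hp; unfold comb in Hp.
  apply in_flat_map in Hp as [p0 [Hp0 Hp]]; apply in_map_iff in Hp as [p1 [<- Hp1]].
  destruct (H0 p0 Hp0) as [a0 b0], (H1 p1 Hp1) as [a1 b1].
  simpl; split; [apply Rmult_le_pos; auto|].
  intro z; destruct (ask_bits z i); [specialize (b1 z)|specialize (b0 z)]; lia.
Qed.

Lemma success_app {X Q L} (ask : X -> Q -> bool) (h : X -> L -> Prop) (D1 D2 : RandAlg Q L) x :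
  success_prob ask h (D1 ++ D2) x = success_prob ask h D1 x + success_prob ask h D2 x.
Proof. unfold success_prob; rewrite map_app, sumR_app; auto. Qed.

Lemma success_scale {X Q L} (ask : X -> Q -> bool) (h : X -> L -> Prop) c (D : RandAlg Q L) x :
  success_prob ask h (scale c D) x = c * success_prob ask h D x.
Proof.
  unfold success_prob, scale; rewrite map_map; simpl.
  rewrite <- sumR_scale; apply sumR_ext; intros; ring.
Qed.

Lemma success_leaf {X Q L} (ask : X -> Q -> bool) (h : X -> L -> Prop) x s :
  success_prob ask h [(1, Leaf s)] x = ind (h x s).
Proof. unfold success_prob; simpl; ring. Qed.

Lemma success_flat_map {X Q L A} (ask : X -> Q -> bool) h (F : A -> RandAlg Q L) l x :
  success_prob ask h (flat_map F l) x = sumR (map (fun a => success_prob ask h (F a) x) l).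
Proof. unfold success_prob; apply sumR_flat_map. Qed.

Lemma success_comb {L} (h : list bool -> L -> Prop) z i (D0 D1 : RandAlg nat L) :
  success_prob ask_bits h (comb i D0 D1) z =
  if ask_bits z i then sumR (map fst D0) * success_prob ask_bits h D1 z
  else success_prob ask_bits h D0 z * sumR (map fst D1).
Proof.
  unfold success_prob, comb; rewrite sumR_flat_map.
  destruct (ask_bits z i) eqn:E.
  - rewrite (sumR_ext _ (fun p0 =>
      sumR (map (fun p => fst p * ind (h z (run ask_bits (snd p) z))) D1) * fst p0)).
    + rewrite sumR_scale; ring.
    + intros p0 _; rewrite map_map; simpl; rewrite E.
      rewrite Rmult_comm, <- sumR_scale; apply sumR_ext; intros; ring.
  - rewrite (sumR_ext _ (fun p0 => sumR (map fst D1) * (fst p0 * ind (h z (run ask_bits (snd p0) z))))).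
    + rewrite sumR_scale; ring.
    + intros p0 _; rewrite map_map; simpl; rewrite E.
      rewrite Rmult_comm, <- sumR_scale; apply sumR_ext; intros; ring.
Qed.

Lemma compose_iff {St} n (f : list bool -> St -> Prop) g z x s :
  length z = n -> (forall i, (i < n)%nat -> ginv g (nth i z false) (nth i x nil)) ->
  (f z s <-> compose n f g x s).
Proof.
  intros Hz Hg; split.
  - intro H; exists z; repeat split; auto; intros i Hi; apply Hg; auto.
  - intros [b [Hb [Hgb Hf]]].
    replace z with b; auto.
    apply nth_ext with (d := false) (d' := false); [lia|].
    intros i Hi; destruct (Hg i ltac:(lia)) as [g1 g2]; specialize (Hgb i ltac:(lia)).
    destruct (nth i b false), (nth i z false); auto; simpl in g2; contradiction.
Qed.

(** * Process [P] on [n] blocks *)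

Definition update {T} (C : nat -> T) (i : nat) (D : T) : nat -> T :=
  fun k => if Nat.eqb k i then D else C k.

Lemma update_eq {T} (C : nat -> T) i D : update C i D i = D.
Proof. unfold update; rewrite Nat.eqb_refl; auto. Qed.

Lemma update_neq {T} (C : nat -> T) i D k : k <> i -> update C i D k = C k.
Proof. intro h; unfold update; apply Nat.eqb_neq in h; rewrite h; auto. Qed.

(* Branch taken by process [P] at a conflict, i.e. when [r] falls strictly
   between [min p_b] and [max p_b]: left iff [r <= p_z]. *)
Definition conflict_branch (z : bool) (p0 p1 : R) : bool :=
  if z then (if Rle_dec p0 p1 then false else true)
  else (if Rle_dec p1 p0 then false else true).

Lemma conflict_branch_split (z : bool) p0 p1 X0 X1 :
  Rmin p0 p1 * X0 + (1 - Rmax p0 p1) * X1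
  + (Rmax p0 p1 - Rmin p0 p1) * (if conflict_branch z p0 p1 then X1 else X0)
  = (if z then p1 else p0) * X0 + (1 - (if z then p1 else p0)) * X1.
Proof.
  unfold conflict_branch, Rmin, Rmax; destruct z; destruct (Rle_dec p0 p1); destruct (Rle_dec p1 p0);
  try (assert (p1 = p0) by lra; subst p1); try ring; exfalso; lra.
Qed.

Lemma exists_le_convex3 {X} (e : X -> R) (a b c v0 v1 v2 : R) :
  0 <= a -> 0 <= b -> 0 <= c -> a + b + c = 1 ->
  (exists x, e x <= v0) -> (exists x, e x <= v1) -> (exists x, e x <= v2) ->
  exists x, e x <= a * v0 + b * v1 + c * v2.
Proof.
  intros Ha Hb Hc Habc [x0 H0] [x1 H1] [x2 H2].
  assert (Hmin : exists x, e x <= e x0 /\ e x <= e x1 /\ e x <= e x2).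
  { destruct (Rle_dec (e x0) (e x1)); destruct (Rle_dec (e x0) (e x2)); destruct (Rle_dec (e x1) (e x2));
      [exists x0|exists x0|exists x2|exists x2|exists x1|exists x2|exists x1|exists x2]; lra. }
  destruct Hmin as [x [h0 [h1 h2]]]; exists x.
  rewrite <- (Rmult_1_l (e x)), <- Habc.
  pose proof (Rmult_le_compat_l a _ _ Ha (Rle_trans _ _ _ h0 H0)).
  pose proof (Rmult_le_compat_l b _ _ Hb (Rle_trans _ _ _ h1 H1)).
  pose proof (Rmult_le_compat_l c _ _ Hc (Rle_trans _ _ _ h2 H2)).
  lra.
Qed.

Section Blocks.
Variables (m n : nat) (mu0 mu1 : list bool -> R).
Hypotheses (mu0_ge0 : nonneg_on m mu0) (mu1_ge0 : nonneg_on m mu1).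
Variable St : Type.

(* [C i] is the subcube of block [i] reached so far. *)
Definition p0_at (C : nat -> list bool -> Prop) i j := cond_prob0 m mu0 (C i) j.
Definition p1_at (C : nat -> list bool -> Prop) i j := cond_prob0 m mu1 (C i) j.
Definition lo_at (C : nat -> list bool -> Prop) i j := pmin m mu0 mu1 (C i) j.
Definition hi_at (C : nat -> list bool -> Prop) i j := pmax m mu0 mu1 (C i) j.
Definition pz_at (z : nat -> bool) (C : nat -> list bool -> Prop) i j :=
  if z i then p1_at C i j else p0_at C i j.
Definition dir_at (z : nat -> bool) (C : nat -> list bool -> Prop) i j :=
  conflict_branch (z i) (p0_at C i j) (p1_at C i j).
Definition refine0 (C : nat -> list bool -> Prop) i j := update C i (cube0 (C i) j).
Definition refine1 (C : nat -> list bool -> Prop) i j := update C i (cube1 (C i) j).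

Lemma refine0_same C i j : refine0 C i j i = cube0 (C i) j.
Proof. apply update_eq. Qed.

Lemma refine1_same C i j : refine1 C i j i = cube1 (C i) j.
Proof. apply update_eq. Qed.

Lemma refine0_other C i j i0 : i0 <> i -> refine0 C i j i0 = C i0.
Proof. apply update_neq. Qed.

Lemma refine1_other C i j i0 : i0 <> i -> refine1 C i j i0 = C i0.
Proof. apply update_neq. Qed.

Lemma lo_hi_bounds C i j : 0 <= lo_at C i j <= hi_at C i j /\ hi_at C i j <= 1.
Proof. apply pmin_pmax_bounds; auto. Qed.

Lemma pz_bounds z C i j : 0 <= pz_at z C i j <= 1.
Proof. unfold pz_at, p0_at, p1_at; destruct (z i); apply cond_prob0_bounds; auto. Qed.

(* The simulating algorithm for [f] with query budget [k] on [z]: the bits of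
   [z] learnt so far are [zk]; when the budget is exhausted it outputs [s0]. *)
Fixpoint simulate (s0 : St) (B : DT (nat * nat) St) (C : nat -> list bool -> Prop)
  (nq zk : nat -> bool) (k : nat) : RandAlg nat St :=
  match B with
  | Leaf l => [(1, Leaf l)]
  | Node (i, j) t0 t1 =>
    if Nat.ltb i n then
      if nq i then
        scale (lo_at C i j) (simulate s0 t0 (refine0 C i j) nq zk k)
        ++ scale (1 - hi_at C i j) (simulate s0 t1 (refine1 C i j) nq zk k)
        ++ scale (hi_at C i j - lo_at C i j)
             (match k with
              | O => [(1, Leaf s0)]
              | S k' => comb i
                  (if conflict_branch false (p0_at C i j) (p1_at C i j)
                   then simulate s0 t1 (refine1 C i j) (update nq i false) (update zk i false) k'
                   else simulate s0 t0 (refine0 C i j) (update nq i false) (update zk i false) k')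
                  (if conflict_branch true (p0_at C i j) (p1_at C i j)
                   then simulate s0 t1 (refine1 C i j) (update nq i false) (update zk i true) k'
                   else simulate s0 t0 (refine0 C i j) (update nq i false) (update zk i true) k')
              end)
      else scale (pz_at zk C i j) (simulate s0 t0 (refine0 C i j) nq zk k)
           ++ scale (1 - pz_at zk C i j) (simulate s0 t1 (refine1 C i j) nq zk k)
    else simulate s0 t0 C nq zk k
  end.

Lemma simulate_dist s0 B : forall C nq zk k,
  weights_ok_within (simulate s0 B C nq zk k) k /\ sumR (map fst (simulate s0 B C nq zk k)) = 1.
Proof.
  induction B as [l|[i j] t0 IH0 t1 IH1]; intros C nq zk k; cbn [simulate].
  { split; [intros p [<-|[]]; simpl; split; [lra|intros; lia]|simpl; ring]. }
  destruct (Nat.ltb i n); [|apply IH0].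
  pose proof (lo_hi_bounds C i j) as [[h1 h2] h3].
  destruct (IH0 (refine0 C i j) nq zk k) as [A0 S0], (IH1 (refine1 C i j) nq zk k) as [A1 S1].
  destruct (nq i).
  - set (Dk := match k with | O => _ | S k' => _ end).
    assert (HDk : weights_ok_within Dk k /\ sumR (map fst Dk) = 1).
    { subst Dk; destruct k as [|k'].
      - split; [intros p [<-|[]]; simpl; split; [lra|intros; lia]|simpl; ring].
      - destruct (conflict_branch false (p0_at C i j) (p1_at C i j)),
                 (conflict_branch true (p0_at C i j) (p1_at C i j));
          (split; [apply weights_ok_comb; (apply IH0 || apply IH1)|]);
          rewrite wsum_comb, ?(proj2 (IH0 _ _ _ _)), ?(proj2 (IH1 _ _ _ _)); ring. }
    split.
    + repeat apply weights_ok_app; apply weights_ok_scale; tauto || lra.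
    + rewrite !wsum_app, !wsum_scale, S0, S1, (proj2 HDk); ring.
  - pose proof (pz_bounds zk C i j).
    split.
    + apply weights_ok_app; apply weights_ok_scale; tauto || lra.
    + rewrite !wsum_app, !wsum_scale, S0, S1; ring.
Qed.
Section Process.
Variable z : nat -> bool.

(* Expected value of [sum cost + sum bonus + F(output)] when [B] runs on
   [x_i ~ mu_{z_i}] revealed by process [P] ([nq i] is the flag [NQ_i]):
   [cost i nq] is paid per query to block [i], [bonus i] per conflict in
   block [i].  Blocks [i >= n] do not exist: [ask_blocks] reads them as
   [false], so such queries are followed to the left. *)
Fixpoint process_value (cost : nat -> bool -> R) (bonus : nat -> R) (F : St -> R)
  (B : DT (nat * nat) St) (C : nat -> list bool -> Prop) (nq : nat -> bool) : R :=
  match B with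
  | Leaf l => F l
  | Node (i, j) t0 t1 =>
    if Nat.ltb i n then
      if nq i then
        cost i true + lo_at C i j * process_value cost bonus F t0 (refine0 C i j) nq
        + (1 - hi_at C i j) * process_value cost bonus F t1 (refine1 C i j) nq
        + (hi_at C i j - lo_at C i j) * (bonus i +
            (if dir_at z C i j then process_value cost bonus F t1 (refine1 C i j) (update nq i false)
             else process_value cost bonus F t0 (refine0 C i j) (update nq i false)))
      else cost i false + pz_at z C i j * process_value cost bonus F t0 (refine0 C i j) nq
           + (1 - pz_at z C i j) * process_value cost bonus F t1 (refine1 C i j) nq
    else cost i (nq i) + process_value cost bonus F t0 C nq
  end.

(* The same expectation with every block sampled directly from [mu_{z_i}]. *)
Fixpoint plain_value (a : R) (F : St -> R) (B : DT (nat * nat) St) (C : nat -> list bool -> Prop) : R :=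
  match B with
  | Leaf l => F l
  | Node (i, j) t0 t1 =>
    if Nat.ltb i n then
      a + pz_at z C i j * plain_value a F t0 (refine0 C i j)
        + (1 - pz_at z C i j) * plain_value a F t1 (refine1 C i j)
    else a + plain_value a F t0 C
  end.

Lemma process_value_plain a F B : forall C nq,
  process_value (fun _ _ => a) (fun _ => 0) F B C nq = plain_value a F B C.
Proof.
  induction B as [l|[i j] t0 IH0 t1 IH1]; intros C nq; simpl; auto.
  destruct (Nat.ltb i n); [|rewrite IH0; auto].
  destruct (nq i); [|rewrite IH0, IH1; reflexivity].
  pose proof (conflict_branch_split (z i) (p0_at C i j) (p1_at C i j)
                (plain_value a F t0 (refine0 C i j)) (plain_value a F t1 (refine1 C i j))) as E.
  unfold dir_at, lo_at, hi_at, pmin, pmax, pz_at in *; fold (p0_at C i j) (p1_at C i j).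
  destruct (conflict_branch (z i) (p0_at C i j) (p1_at C i j)); rewrite !IH0, !IH1; lra.
Qed.

Lemma process_value_ext c1 c2 b1 b2 F1 F2 B :
  (forall i b, c1 i b = c2 i b) -> (forall i, (i < n)%nat -> b1 i = b2 i) -> (forall s, F1 s = F2 s) ->
  forall C nq, process_value c1 b1 F1 B C nq = process_value c2 b2 F2 B C nq.
Proof.
  intros Hc Hb HF; induction B as [l|[i j] t0 IH0 t1 IH1]; intros C nq; simpl; auto.
  destruct (Nat.ltb i n) eqn:E; [|rewrite IH0, Hc; auto].
  apply Nat.ltb_lt in E.
  destruct (nq i); rewrite ?IH0, ?IH1, ?Hc, ?Hb; auto.
Qed.

Lemma process_value_lin al be c1 c2 b1 b2 F1 F2 B : forall C nq,
  process_value (fun i b => al * c1 i b + be * c2 i b) (fun i => al * b1 i + be * b2 i)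
     (fun s => al * F1 s + be * F2 s) B C nq
  = al * process_value c1 b1 F1 B C nq + be * process_value c2 b2 F2 B C nq.
Proof.
  induction B as [l|[i j] t0 IH0 t1 IH1]; intros C nq; simpl; auto.
  destruct (Nat.ltb i n); [|rewrite IH0; ring].
  destruct (nq i); [|rewrite IH0, IH1; ring].
  destruct (dir_at z C i j); rewrite !IH0, !IH1; ring.
Qed.

Lemma process_value_mono c1 c2 b1 b2 F1 F2 B :
  (forall i b, c1 i b <= c2 i b) -> (forall i, (i < n)%nat -> b1 i <= b2 i) -> (forall s, F1 s <= F2 s) ->
  forall C nq, process_value c1 b1 F1 B C nq <= process_value c2 b2 F2 B C nq.
Proof.
  intros Hc Hb HF; induction B as [l|[i j] t0 IH0 t1 IH1]; intros C nq; simpl; auto.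
  destruct (Nat.ltb i n) eqn:E; [|specialize (IH0 C nq); specialize (Hc i (nq i)); lra].
  apply Nat.ltb_lt in E.
  pose proof (lo_hi_bounds C i j) as [[h1 h2] h3]; pose proof (pz_bounds z C i j).
  pose proof (IH0 (refine0 C i j) nq); pose proof (IH1 (refine1 C i j) nq).
  destruct (nq i).
  - pose proof (Hc i true); pose proof (Hb i E).
    assert (Hd : forall X Y, X <= Y -> (hi_at C i j - lo_at C i j) * X <= (hi_at C i j - lo_at C i j) * Y)
      by (intros; apply Rmult_le_compat_l; lra).
    destruct (dir_at z C i j);
      [pose proof (IH1 (refine1 C i j) (update nq i false))
      |pose proof (IH0 (refine0 C i j) (update nq i false))];
      apply Rplus_le_compat; [|apply Hd; lra| |apply Hd; lra];
      apply Rplus_le_compat; [|apply Rmult_le_compat_l; lra| |apply Rmult_le_compat_l; lra];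
      apply Rplus_le_compat; try lra; apply Rmult_le_compat_l; lra.
  - pose proof (Hc i false).
    apply Rplus_le_compat; [apply Rplus_le_compat|]; try lra; apply Rmult_le_compat_l; lra.
Qed.

Lemma process_value_const c B C nq : process_value (fun _ _ => 0) (fun _ => 0) (fun _ => c) B C nq = c.
Proof.
  rewrite process_value_plain; revert C.
  induction B as [l|[i j] t0 IH0 t1 IH1]; intros C; simpl; auto.
  destruct (Nat.ltb i n); rewrite ?IH0, ?IH1; ring.
Qed.

Definition block_cost (i0 : nat) : nat -> bool -> R := fun i b => if andb (Nat.eqb i i0) b then 1 else 0.
Definition block_bonus (i0 : nat) (v : R) : nat -> R := fun i => if Nat.eqb i i0 then v else 0.

Lemma block_value_after_conflict i0 v B : forall C nq, nq i0 = false ->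
  process_value (block_cost i0) (block_bonus i0 v) (fun _ => 0) B C nq = 0.
Proof.
  induction B as [l|[i j] t0 IH0 t1 IH1]; intros C nq Hq; simpl; auto.
  unfold block_cost, block_bonus.
  destruct (Nat.eqb i i0) eqn:E.
  - apply Nat.eqb_eq in E; subst i; rewrite Hq.
    destruct (Nat.ltb i0 n); rewrite ?IH0, ?IH1; auto; simpl; ring.
  - apply Nat.eqb_neq in E; simpl.
    assert (Hq' : update nq i false i0 = false) by (rewrite update_neq; auto).
    destruct (Nat.ltb i n); [destruct (nq i); [destruct (dir_at z C i j)|]|];
    rewrite ?IH0, ?IH1; auto; ring.
Qed.

(* Following only block [i0] until its first conflict is a decision tree on
   [{0,1}^m], so [chig] times its conflict probability is nearly paid for by
   its queries. *)
Lemma block_excess_tree chig i0 B : (i0 < n)%nat -> forall C nq, nq i0 = true ->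
  exists T, conflict_excess m mu0 mu1 chig (C i0) T <=
            process_value (block_cost i0) (block_bonus i0 (- chig)) (fun _ => 0) B C nq.
Proof.
  intro Hi0; induction B as [l|[i j] t0 IH0 t1 IH1]; intros C nq Hq; simpl.
  { exists (Leaf true); unfold conflict_excess; simpl; lra. }
  set (V := process_value (block_cost i0) (block_bonus i0 (- chig)) (fun _ => 0)) in *.
  pose proof (lo_hi_bounds C i j) as [[h1 h2] h3].
  unfold block_cost, block_bonus.
  destruct (Nat.eqb_spec i i0) as [<-|Hne].
  - replace (Nat.ltb i n) with true by (symmetry; apply Nat.ltb_lt; auto); rewrite Hq; simpl.
    destruct (IH0 (refine0 C i j) nq Hq) as [T0 H0], (IH1 (refine1 C i j) nq Hq) as [T1 H1].
    rewrite refine0_same in H0; rewrite refine1_same in H1.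
    exists (Node j T0 T1); rewrite conflict_excess_node.
    assert (Hz : (if dir_at z C i j then V t1 (refine1 C i j) (update nq i false)
                  else V t0 (refine0 C i j) (update nq i false)) = 0)
      by (destruct (dir_at z C i j); apply block_value_after_conflict; rewrite update_eq; auto).
    rewrite Hz.
    pose proof (Rmult_le_compat_l _ _ _ h1 H0).
    pose proof (Rmult_le_compat_l (1 - hi_at C i j) _ _ ltac:(lra) H1).
    unfold lo_at, hi_at in *; lra.
  - simpl.
    assert (Hne' : i0 <> i) by auto.
    assert (Hq' : update nq i false i0 = true) by (rewrite update_neq; auto).
    destruct (Nat.ltb i n); [|destruct (IH0 C nq Hq) as [T HT]; exists T; lra].
    pose proof (IH0 (refine0 C i j) nq Hq) as E0; pose proof (IH1 (refine1 C i j) nq Hq) as E1.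
    rewrite refine0_other in E0 by auto; rewrite refine1_other in E1 by auto.
    destruct (nq i).
    + assert (Ed : exists T, conflict_excess m mu0 mu1 chig (C i0) T <=
                     (if dir_at z C i j then V t1 (refine1 C i j) (update nq i false)
                      else V t0 (refine0 C i j) (update nq i false)))
        by (destruct (dir_at z C i j);
            [rewrite <- (refine1_other C i j i0 Hne'); apply IH1
            |rewrite <- (refine0_other C i j i0 Hne'); apply IH0]; auto).
      destruct (exists_le_convex3 (conflict_excess m mu0 mu1 chig (C i0))
                  (lo_at C i j) (1 - hi_at C i j) (hi_at C i j - lo_at C i j) _ _ _
                  h1 ltac:(lra) ltac:(lra) ltac:(ring) E0 E1 Ed) as [T HT].
      exists T; lra.
    + pose proof (pz_bounds z C i j).
      destruct (exists_le_convex3 (conflict_excess m mu0 mu1 chig (C i0))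
                  (pz_at z C i j) (1 - pz_at z C i j) 0 _ _ _
                  ltac:(lra) ltac:(lra) (Rle_refl 0) ltac:(ring) E0 E1 E1) as [T HT].
      exists T; lra.
Qed.

Definition mu_of (b : bool) : list bool -> R := if b then mu1 else mu0.

Lemma mu_of_ge0 b : nonneg_on m (mu_of b).
Proof. destruct b; auto. Qed.

Definition weight (C : nat -> list bool -> Prop) (x : list (list bool)) : R :=
  prodR n (fun i => mu_of (z i) (nth i x nil) * ind (C i (nth i x nil))).
Definition total_mass (C : nat -> list bool -> Prop) : R :=
  prodR n (fun i => mass m (mu_of (z i)) (C i)).

Lemma sumR_weight C : sumR (map (weight C) (allblocks m n)) = total_mass C.
Proof. apply (sumR_prodR_allblocks m n (fun i y => mu_of (z i) y * ind (C i y))). Qed.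

Lemma weight_ge0 C x : blocks n m x -> 0 <= weight C x.
Proof.
  intros [Hl HF]; apply prodR_ge0; intros i Hi.
  assert (length (nth i x nil) = m) by (rewrite Forall_forall in HF; apply HF, nth_In; lia).
  pose proof (mu_of_ge0 (z i) (nth i x nil) H); pose proof (ind_bounds (C i (nth i x nil))); nra.
Qed.

Lemma pz_at_mu_of C i j : pz_at z C i j = cond_prob0 m (mu_of (z i)) (C i) j.
Proof. unfold pz_at, p0_at, p1_at, mu_of; destruct (z i); auto. Qed.

Lemma total_mass_refine0 C i j : (i < n)%nat -> total_mass (refine0 C i j) = pz_at z C i j * total_mass C.
Proof.
  intro Hi; apply prodR_replace with (i := i); auto.
  - rewrite refine0_same, pz_at_mu_of; apply mass_cube0, mu_of_ge0.
  - intros k hk; rewrite refine0_other; auto.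
Qed.

Lemma total_mass_refine1 C i j : (i < n)%nat -> total_mass (refine1 C i j) = (1 - pz_at z C i j) * total_mass C.
Proof.
  intro Hi; apply prodR_replace with (i := i); auto.
  - rewrite refine1_same, pz_at_mu_of; apply mass_cube1, mu_of_ge0.
  - intros k hk; rewrite refine1_other; auto.
Qed.

Lemma weight_refine0 C i j x : (i < n)%nat ->
  weight (refine0 C i j) x = ind (ask_blocks x (i, j) = false) * weight C x.
Proof.
  intro Hi; apply prodR_replace with (i := i); auto.
  - rewrite refine0_same; unfold cube0, ask_blocks; cbn [fst snd].
    rewrite <- ind_and; ring.
  - intros k hk; rewrite refine0_other; auto.
Qed.

Lemma weight_refine1 C i j x : (i < n)%nat ->
  weight (refine1 C i j) x = ind (ask_blocks x (i, j) = true) * weight C x.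
Proof.
  intro Hi; apply prodR_replace with (i := i); auto.
  - rewrite refine1_same; unfold cube1, ask_blocks; cbn [fst snd].
    rewrite <- ind_and; ring.
  - intros k hk; rewrite refine1_other; auto.
Qed.

Lemma plain_value_expectation (a : R) (F : St -> R) B : forall C,
  total_mass C * plain_value a F B C =
  sumR (map (fun x => weight C x * (a * INR (nqueries ask_blocks B x) + F (run ask_blocks B x)))
    (allblocks m n)).
Proof.
  induction B as [l|[i j] t0 IH0 t1 IH1]; intros C; cbn [plain_value nqueries run].
  - rewrite (sumR_ext _ (fun x => F l * weight C x)) by (intros; simpl INR; ring).
    rewrite sumR_scale, sumR_weight; ring.
  - destruct (Nat.ltb i n) eqn:E.
    + apply Nat.ltb_lt in E.
      rewrite (sumR_ext _ (fun x => a * weight (refine0 C i j) x + a * weight (refine1 C i j) x +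
                  (weight (refine0 C i j) x * (a * INR (nqueries ask_blocks t0 x) + F (run ask_blocks t0 x)) +
                   weight (refine1 C i j) x * (a * INR (nqueries ask_blocks t1 x) + F (run ask_blocks t1 x))))).
      * rewrite !sumR_plus, !sumR_scale, !sumR_weight, <- IH0, <- IH1, total_mass_refine0, total_mass_refine1
          by auto; ring.
      * intros x _; rewrite weight_refine0, weight_refine1, S_INR by auto.
        destruct (ask_blocks x (i, j));
          rewrite ?(ind_F (true = false)), ?(ind_T (true = true)),
                  ?(ind_T (false = false)), ?(ind_F (false = true)) by (auto; discriminate); ring.
    + apply Nat.ltb_ge in E.
      rewrite (sumR_ext _ (fun x => a * weight C x +
                  weight C x * (a * INR (nqueries ask_blocks t0 x) + F (run ask_blocks t0 x)))).
      * rewrite sumR_plus, sumR_scale, sumR_weight, <- IH0; ring.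
      * intros x Hx; destruct (allblocks_blocks m n x Hx) as [Hl _].
        rewrite S_INR; unfold ask_blocks; simpl.
        rewrite (nth_overflow x nil) by lia; destruct j; simpl; ring.
Qed.

(* Success probability of the simulation with budget [k] for the queries
   to [z]; [Fs] scores an output and [dflt] the default output. *)
Fixpoint trunc_success (Fs : St -> R) (dflt : R) (B : DT (nat * nat) St) (C : nat -> list bool -> Prop)
  (nq : nat -> bool) (k : nat) : R :=
  match B with
  | Leaf l => Fs l
  | Node (i, j) t0 t1 =>
    if Nat.ltb i n then
      if nq i then
        lo_at C i j * trunc_success Fs dflt t0 (refine0 C i j) nq k
        + (1 - hi_at C i j) * trunc_success Fs dflt t1 (refine1 C i j) nq k
        + (hi_at C i j - lo_at C i j) *
          (match k with
           | O => dflt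
           | S k' => if dir_at z C i j then trunc_success Fs dflt t1 (refine1 C i j) (update nq i false) k'
                     else trunc_success Fs dflt t0 (refine0 C i j) (update nq i false) k'
           end)
      else pz_at z C i j * trunc_success Fs dflt t0 (refine0 C i j) nq k
           + (1 - pz_at z C i j) * trunc_success Fs dflt t1 (refine1 C i j) nq k
    else trunc_success Fs dflt t0 C nq k
  end.

(* Scoring every output 0 and the default output 1 gives the probability
   that the budget is exhausted. *)
Definition overflow_prob := trunc_success (fun _ => 0) 1.

Lemma trunc_success_bounds Fs dflt B : (forall s, 0 <= Fs s <= 1) -> 0 <= dflt <= 1 ->
  forall C nq k, 0 <= trunc_success Fs dflt B C nq k <= 1.
Proof.
  intros HF Hd; induction B as [l|[i j] t0 IH0 t1 IH1]; intros C nq k; cbn [trunc_success]; auto.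
  pose proof (lo_hi_bounds C i j) as [[h1 h2] h3]; pose proof (pz_bounds z C i j).
  pose proof (IH0 (refine0 C i j) nq k); pose proof (IH1 (refine1 C i j) nq k).
  destruct (Nat.ltb i n); [|auto].
  destruct (nq i); [|nra].
  assert (0 <= match k with
               | O => dflt
               | S k' => if dir_at z C i j then trunc_success Fs dflt t1 (refine1 C i j) (update nq i false) k'
                         else trunc_success Fs dflt t0 (refine0 C i j) (update nq i false) k'
               end <= 1) by (destruct k; [auto|destruct (dir_at z C i j); auto]).
  nra.
Qed.

Definition expected_conflicts B C nq :=
  process_value (fun _ _ => 0) (fun _ => 1) (fun _ => 0) B C nq.

Lemma expected_conflicts_ge0 B C nq : 0 <= expected_conflicts B C nq.
Proof.
  rewrite <- (process_value_const 0 B C nq); apply process_value_mono; auto; intros; lra.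
Qed.

Lemma markov_conflicts B : forall C nq k,
  INR (S k) * overflow_prob B C nq k <= expected_conflicts B C nq.
Proof.
  unfold overflow_prob, expected_conflicts.
  induction B as [l|[i j] t0 IH0 t1 IH1]; intros C nq k; cbn [trunc_success process_value]; [lra|].
  pose proof (lo_hi_bounds C i j) as [[h1 h2] h3]; pose proof (pz_bounds z C i j).
  pose proof (IH0 (refine0 C i j) nq k); pose proof (IH1 (refine1 C i j) nq k).
  destruct (Nat.ltb i n); [|specialize (IH0 C nq k); lra].
  destruct (nq i); [|nra].
  set (E := process_value (fun _ _ => 0) (fun _ => 1) (fun _ => 0)).
  set (Ed := if dir_at z C i j then E t1 (refine1 C i j) (update nq i false)
             else E t0 (refine0 C i j) (update nq i false)).
  assert (HX : INR (S k) * match k with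
         | O => 1
         | S k' => if dir_at z C i j then trunc_success (fun _ => 0) 1 t1 (refine1 C i j) (update nq i false) k'
                   else trunc_success (fun _ => 0) 1 t0 (refine0 C i j) (update nq i false) k'
         end <= 1 + Ed).
  { assert (0 <= Ed) by (unfold Ed; destruct (dir_at z C i j); apply expected_conflicts_ge0).
    destruct k as [|k']; [simpl; lra|].
    unfold Ed; destruct (dir_at z C i j);
      [pose proof (IH1 (refine1 C i j) (update nq i false) k');
       pose proof (trunc_success_bounds (fun _ => 0) 1 t1 (fun _ => conj (Rle_refl 0) Rle_0_1)
                     (conj Rle_0_1 (Rle_refl 1)) (refine1 C i j) (update nq i false) k')
      |pose proof (IH0 (refine0 C i j) (update nq i false) k');
       pose proof (trunc_success_bounds (fun _ => 0) 1 t0 (fun _ => conj (Rle_refl 0) Rle_0_1)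
                     (conj Rle_0_1 (Rle_refl 1)) (refine0 C i j) (update nq i false) k')];
      unfold E in *; rewrite (S_INR (S k')); lra. }
  fold Ed.
  pose proof (Rmult_le_compat_l _ _ _ h1 (IH0 (refine0 C i j) nq k)).
  pose proof (Rmult_le_compat_l (1 - hi_at C i j) _ _ ltac:(lra) (IH1 (refine1 C i j) nq k)).
  pose proof (Rmult_le_compat_l (hi_at C i j - lo_at C i j) _ _ ltac:(lra) HX).
  unfold Ed, E in *; lra.
Qed.

Definition full_success Fs B C nq := process_value (fun _ _ => 0) (fun _ => 0) Fs B C nq.

Lemma full_success_le1 Fs B C nq : (forall s, Fs s <= 1) -> full_success Fs B C nq <= 1.
Proof.
  intro H; rewrite <- (process_value_const 1 B C nq); apply process_value_mono; auto; intros; lra.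
Qed.

Lemma trunc_success_ge Fs dflt B : (forall s, 0 <= Fs s <= 1) -> 0 <= dflt ->
  forall C nq k, full_success Fs B C nq - overflow_prob B C nq k <= trunc_success Fs dflt B C nq k.
Proof.
  unfold full_success, overflow_prob.
  intros HF Hd; induction B as [l|[i j] t0 IH0 t1 IH1]; intros C nq k;
    cbn [trunc_success process_value]; [lra|].
  pose proof (lo_hi_bounds C i j) as [[h1 h2] h3]; pose proof (pz_bounds z C i j).
  pose proof (IH0 (refine0 C i j) nq k); pose proof (IH1 (refine1 C i j) nq k).
  destruct (Nat.ltb i n); [|specialize (IH0 C nq k); lra].
  destruct (nq i); [|nra].
  set (E := process_value (fun _ _ => 0) (fun _ => 0) Fs).
  set (Fd := if dir_at z C i j then E t1 (refine1 C i j) (update nq i false)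
             else E t0 (refine0 C i j) (update nq i false)).
  assert (HX : Fd - match k with
         | O => 1
         | S k' => if dir_at z C i j then trunc_success (fun _ => 0) 1 t1 (refine1 C i j) (update nq i false) k'
                   else trunc_success (fun _ => 0) 1 t0 (refine0 C i j) (update nq i false) k'
         end <= match k with
         | O => dflt
         | S k' => if dir_at z C i j then trunc_success Fs dflt t1 (refine1 C i j) (update nq i false) k'
                   else trunc_success Fs dflt t0 (refine0 C i j) (update nq i false) k'
         end).
  { destruct k as [|k'].
    - assert (Fd <= 1) by (unfold Fd; destruct (dir_at z C i j); apply full_success_le1; intro s; apply HF).
      lra.
    - unfold Fd; destruct (dir_at z C i j); [apply IH1|apply IH0]. }
  fold Fd.
  pose proof (Rmult_le_compat_l _ _ _ h1 (IH0 (refine0 C i j) nq k)).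
  pose proof (Rmult_le_compat_l (1 - hi_at C i j) _ _ ltac:(lra) (IH1 (refine1 C i j) nq k)).
  pose proof (Rmult_le_compat_l (hi_at C i j - lo_at C i j) _ _ ltac:(lra) HX).
  unfold Fd, E in *; lra.
Qed.

Definition whole : nat -> list bool -> Prop := fun _ _ => True.
Definition all_true : nat -> bool := fun _ => true.

Section Probabilities.
Hypotheses (mu0_sum1 : sumR (map mu0 (allbits m)) = 1) (mu1_sum1 : sumR (map mu1 (allbits m)) = 1).

Lemma total_mass_whole : total_mass whole = 1.
Proof.
  unfold total_mass; rewrite <- (prodR_one n); apply prodR_ext; intros i _.
  unfold mu_of; destruct (z i); apply mass_whole; auto.
Qed.

Lemma expected_queries_le B r1 : (forall x, blocks n m x -> (nqueries ask_blocks B x <= r1)%nat) ->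
  process_value (fun _ _ => 1) (fun _ => 0) (fun _ => 0) B whole all_true <= INR r1.
Proof.
  intro Hd; rewrite process_value_plain.
  pose proof (plain_value_expectation 1 (fun _ => 0) B whole) as E.
  rewrite total_mass_whole, Rmult_1_l in E; rewrite E.
  pose proof (sumR_weight whole) as SW; rewrite total_mass_whole in SW.
  apply Rle_trans with (sumR (map (fun x => INR r1 * weight whole x) (allblocks m n))).
  - apply sumR_le; intros x Hx; pose proof (allblocks_blocks m n x Hx) as Hv.
    pose proof (weight_ge0 whole x Hv); pose proof (le_INR _ _ (Hd x Hv)); nra.
  - rewrite sumR_scale, SW; lra.
Qed.

Lemma full_success_expectation Fs B :
  full_success Fs B whole all_true =
  sumR (map (fun x => weight whole x * Fs (run ask_blocks B x)) (allblocks m n)).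
Proof.
  unfold full_success; rewrite process_value_plain, <- (Rmult_1_l (plain_value _ _ _ _)),
    <- total_mass_whole, plain_value_expectation.
  apply sumR_ext; intros; ring.
Qed.

End Probabilities.

Lemma process_value_sumN cs bs B C nq N :
  sumN N (fun i0 => process_value (cs i0) (bs i0) (fun _ => 0) B C nq) =
  process_value (fun i b => sumN N (fun i0 => cs i0 i b)) (fun i => sumN N (fun i0 => bs i0 i))
    (fun _ => 0) B C nq.
Proof.
  induction N; simpl.
  - symmetry; apply (process_value_const 0).
  - rewrite IHN, <- (Rmult_1_l (process_value _ _ _ B C nq)) at 1.
    rewrite <- (Rmult_1_l (process_value (cs N) _ _ B C nq)), <- process_value_lin.
    apply process_value_ext; intros; ring.
Qed.

Lemma queries_minus_conflicts chig B C nq :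
  process_value (fun i b => if andb (Nat.ltb i n) b then 1 else 0) (fun _ => 0) (fun _ => 0) B C nq
  - chig * expected_conflicts B C nq =
  sumN n (fun i0 => process_value (block_cost i0) (block_bonus i0 (- chig)) (fun _ => 0) B C nq).
Proof.
  rewrite process_value_sumN; unfold expected_conflicts.
  transitivity (1 * process_value (fun i b => if andb (Nat.ltb i n) b then 1 else 0)
                      (fun _ => 0) (fun _ => 0) B C nq
                + (- chig) * process_value (fun _ _ => 0) (fun _ => 1) (fun _ => 0) B C nq); [ring|].
  rewrite <- process_value_lin; apply process_value_ext.
  - intros i b; unfold block_cost; destruct b.
    + rewrite (sumN_ext n _ (fun i0 => if Nat.eqb i i0 then 1 else 0))
        by (intro; rewrite Bool.andb_true_r; auto).
      rewrite sumN_delta, Bool.andb_true_r; destruct (Nat.ltb i n); ring.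
    + rewrite (sumN_ext n _ (fun i0 => if Nat.eqb i i0 then 0 else 0))
        by (intro; rewrite Bool.andb_false_r; destruct (Nat.eqb i i0); auto).
      rewrite sumN_delta, Bool.andb_false_r; destruct (Nat.ltb i n); ring.
  - intros i Hi; unfold block_bonus; rewrite sumN_delta.
    replace (Nat.ltb i n) with true by (symmetry; apply Nat.ltb_lt; auto); ring.
  - intros; ring.
Qed.

Lemma expected_conflicts_bound chig eps r1 B :
  sumR (map mu0 (allbits m)) = 1 -> sumR (map mu1 (allbits m)) = 1 ->
  (forall T, - 2 * eps <= conflict_excess m mu0 mu1 chig (fun _ => True) T) ->
  (forall x, blocks n m x -> (nqueries ask_blocks B x <= r1)%nat) ->
  chig * expected_conflicts B whole all_true <= INR r1 + 2 * INR n * eps.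
Proof.
  intros S0 S1 Hexc Hd.
  pose proof (queries_minus_conflicts chig B whole all_true) as Hsplit.
  assert (Hblocks : INR n * (- 2 * eps) <=
     sumN n (fun i0 => process_value (block_cost i0) (block_bonus i0 (- chig)) (fun _ => 0) B whole all_true)).
  { apply sumN_ge; intros i0 Hi0.
    destruct (block_excess_tree chig i0 B Hi0 whole all_true eq_refl) as [T HT].
    pose proof (Hexc T); change (whole i0) with (fun _ : list bool => True) in HT; lra. }
  assert (Hq : process_value (fun i b => if andb (Nat.ltb i n) b then 1 else 0) (fun _ => 0) (fun _ => 0)
                 B whole all_true <= INR r1).
  { eapply Rle_trans; [|apply (expected_queries_le S0 S1 B r1 Hd)].
    apply process_value_mono; intros; try destruct (andb _ _); lra. }
  pose proof (pos_INR n); lra.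
Qed.
End Process.

Lemma simulate_success (h : list bool -> St -> Prop) (zb : list bool) (s0 : St) B :
  forall C nq zk k, (forall i, nq i = false -> zk i = nth i zb false) ->
  success_prob ask_bits h (simulate s0 B C nq zk k) zb =
  trunc_success (fun i => nth i zb false) (fun s => ind (h zb s)) (ind (h zb s0)) B C nq k.
Proof.
  induction B as [l|[i j] t0 IH0 t1 IH1]; intros C nq zk k Hzk; cbn [simulate trunc_success];
    [apply success_leaf|].
  destruct (Nat.ltb i n); [|apply IH0; auto].
  destruct (nq i) eqn:Hnq.
  - rewrite !success_app, !success_scale, IH0, IH1 by auto.
    destruct k as [|k']; [rewrite success_leaf; ring|].
    rewrite success_comb; unfold ask_bits, dir_at.
    assert (Hzk' : forall b, nth i zb false = b ->
              forall i0, update nq i false i0 = false -> update zk i b i0 = nth i0 zb false).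
    { intros b Hb i0; destruct (Nat.eq_dec i0 i) as [->|ne].
      - rewrite !update_eq; auto.
      - rewrite !update_neq by auto; apply Hzk. }
    destruct (nth i zb false) eqn:Ez;
      destruct (conflict_branch true (p0_at C i j) (p1_at C i j));
      destruct (conflict_branch false (p0_at C i j) (p1_at C i j));
      rewrite (proj2 (simulate_dist s0 _ _ _ _ _)), ?IH0, ?IH1; auto; ring.
  - rewrite !success_app, !success_scale, IH0, IH1 by auto.
    unfold pz_at; rewrite (Hzk i Hnq); reflexivity.
Qed.

(* Without truncation the simulation reproduces [A] on [x_i ~ mu_{z_i}],
   and every such [x] is a valid input of [f o g^n] whose answers are
   answers of [f] at [z]. *)
Lemma full_success_ge (f : list bool -> St -> Prop) g (zb : list bool) (A : RandAlg (nat * nat) St) :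
  length zb = n -> dist_on_ginv g m false mu0 -> dist_on_ginv g m true mu1 ->
  (forall x, blocks n m x -> success_prob ask_blocks (compose n f g) A x >= 1 - 1/3) ->
  2/3 <= sumR (map (fun p => fst p *
           full_success (fun i => nth i zb false) (fun s => ind (f zb s)) (snd p) whole all_true) A).
Proof.
  intros Hz Hd0 Hd1 HA; set (z := fun i => nth i zb false).
  pose proof Hd0 as [_ [S0 G0]]; pose proof Hd1 as [_ [S1 G1]].
  rewrite (sumR_ext _ (fun p => sumR (map (fun x => fst p * (weight z whole x *
             ind (f zb (run ask_blocks (snd p) x)))) (allblocks m n))))
    by (intros p _; rewrite full_success_expectation, sumR_scale by auto; reflexivity).
  rewrite sumR_swap.
  apply Rle_trans with (sumR (map (fun x => 2/3 * weight z whole x) (allblocks m n)))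
    ; [rewrite sumR_scale, sumR_weight, total_mass_whole by auto; lra|].
  apply sumR_le; intros x Hx; pose proof (allblocks_blocks m n x Hx) as Hv.
  pose proof (weight_ge0 z whole x Hv) as Wn.
  destruct (Req_EM_T (weight z whole x) 0) as [e|e].
  { rewrite e, (sumR_ext _ (fun _ => 0)) by (intros; ring); rewrite sumR_zero; lra. }
  assert (Hg : forall i, (i < n)%nat -> ginv g (nth i zb false) (nth i x nil)).
  { intros i Hi; pose proof (prodR_neq0 n _ e i Hi) as Hnz.
    assert (Hl : length (nth i x nil) = m)
      by (destruct Hv as [Hlx HF]; rewrite Forall_forall in HF; apply HF, nth_In; lia).
    unfold mu_of, z in Hnz; destruct (nth i zb false).
    - apply G1; auto; intro h; apply Hnz; rewrite h; ring.
    - apply G0; auto; intro h; apply Hnz; rewrite h; ring. }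
  rewrite (sumR_ext _ (fun p => weight z whole x * (fst p * ind (compose n f g x (run ask_blocks (snd p) x)))))
    by (intros p _; rewrite (ind_iff _ _ (compose_iff n f g zb x _ Hz Hg)); ring).
  rewrite sumR_scale; fold (success_prob ask_blocks (compose n f g) A x).
  pose proof (HA x Hv); nra.
Qed.

End Blocks.

(** * The simulation and the main theorem *)

Lemma floor_exists x : 0 <= x -> exists k : nat, INR k <= x < INR k + 1.
Proof.
  intro Hx; destruct (archimed x) as [h1 h2].
  assert (Hu : (1 <= up x)%Z).
  { apply le_IZR; simpl.
    destruct (Z_lt_le_dec (up x) 1) as [l|l]; [|apply IZR_le in l; simpl in l; lra].
    assert (up x <= 0)%Z by lia; apply IZR_le in H; simpl in H; lra. }
  exists (Z.to_nat (up x - 1)).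
  rewrite INR_IZR_INZ, Z2Nat.id, minus_IZR by lia; simpl; lra.
Qed.

Lemma min_nat (P : nat -> Prop) : (exists d, P d) -> exists r, P r /\ forall d, P d -> (r <= d)%nat.
Proof.
  intros [d Hd]; induction d as [d IH] using lt_wf_ind.
  destruct (classic (exists d', P d' /\ (d' < d)%nat)) as [[d' [Hd' lt]]|Hn]; [apply (IH d'); auto|].
  exists d; split; auto; intros e Pe.
  destruct (Nat.le_gt_cases d e); auto; exfalso; apply Hn; eauto.
Qed.

Lemma budget_choice (chig : R) (r1 n : nat) : 0 < chig ->
  exists (k : nat) (eps : R), 0 < eps /\ INR k * chig <= 9 * INR r1 /\
    9 * (INR r1 + 2 * INR n * eps) <= chig * INR (S k).
Proof.
  intro Hc.
  assert (0 <= 9 * INR r1 / chig)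
    by (pose proof (pos_INR r1); apply Rmult_le_pos; [lra|left; apply Rinv_0_lt_compat; lra]).
  destruct (floor_exists _ H) as [k [Hk1 Hk2]].
  assert (Hk : INR k * chig <= 9 * INR r1 < (INR k + 1) * chig).
  { assert (E : 9 * INR r1 / chig * chig = 9 * INR r1) by (field; lra).
    rewrite <- E; split; [apply Rmult_le_compat_r|apply Rmult_lt_compat_r]; lra. }
  set (slack := (INR k + 1) * chig - 9 * INR r1).
  assert (Hn : 0 < INR n + 1) by (pose proof (pos_INR n); lra).
  exists k, (slack / (18 * (INR n + 1))); repeat split; try lra.
  - apply Rdiv_lt_0_compat; unfold slack; lra.
  - rewrite S_INR.
    assert (E : 18 * INR n * (slack / (18 * (INR n + 1))) = slack * (INR n / (INR n + 1)))
      by (field; lra).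
    assert (INR n / (INR n + 1) <= 1)
      by (apply (Rmult_le_reg_r (INR n + 1)); [lra|]; unfold Rdiv;
          rewrite Rmult_assoc, Rinv_l, Rmult_1_r by lra; lra).
    assert (0 < slack) by (unfold slack; lra).
    unfold slack in *; nra.
Qed.

Lemma conflict_complexity_ge1 g m chig :
  (exists x, length x = m /\ ginv g false x) -> (exists x, length x = m /\ ginv g true x) ->
  is_conflict_complexity g m chig -> 1 <= chig.
Proof.
  intros [x0 [l0 h0]] [x1 [l1 h1]] Hchi.
  destruct (lub_approx _ chig 1 Hchi Rlt_0_1) as [v [[mu0 [mu1 [d0 [d1 Hv]]]] _]].
  assert (v <= chig) by (apply (proj1 Hchi); exists mu0, mu1; auto).
  enough (1 <= v) by lra.
  apply (proj2 Hv); intros y [[b|j t0 t1] [HB ->]].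
  - exfalso; destruct b; [specialize (HB x0 false l0 h0)|specialize (HB x1 true l1 h1)]; discriminate.
  - unfold chi_val; rewrite EN_queries_to_conflict; simpl.
    pose proof (dist_nonneg _ _ _ _ d0) as N0; pose proof (dist_nonneg _ _ _ _ d1) as N1.
    pose proof (pmin_pmax_bounds m mu0 mu1 N0 N1 (fun _ => True) j).
    pose proof (queries_to_conflict_ge0 m mu0 mu1 N0 N1 t0 (cube0 (fun _ => True) j)).
    pose proof (queries_to_conflict_ge0 m mu0 mu1 N0 N1 t1 (cube1 (fun _ => True) j)).
    nra.
Qed.

Lemma near_optimal_pair g m chig eps :
  is_conflict_complexity g m chig -> 0 < eps ->
  exists mu0 mu1, dist_on_ginv g m false mu0 /\ dist_on_ginv g m true mu1 /\
    forall T, - 2 * eps <= conflict_excess m mu0 mu1 chig (fun _ => True) T.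
Proof.
  intros Hchi Heps.
  destruct (lub_approx _ chig eps Hchi Heps) as [v [[mu0 [mu1 [d0 [d1 Hv]]]] Hclose]].
  exists mu0, mu1; split; [|split]; auto.
  apply (conflict_excess_lower_bound g m mu0 mu1 chig eps d0 d1 Heps).
  - intros B HB; assert (v <= chi_val m mu0 mu1 B) by (apply (proj1 Hv); eauto); lra.
  - intros nu0 nu1 r Hn0 Hn1 Hr; apply (proj1 Hchi); exists nu0, nu1; auto.
  - destruct (glb_nonempty _ _ Hv) as [w [B [HB _]]]; eauto.
Qed.

Section Simulation.
Variables (n m : nat) (St : Type) (f : list bool -> St -> Prop) (g : list bool -> bool -> Prop).
Variables (mu0 mu1 : list bool -> R) (chig eps : R) (r1 k : nat).
Hypotheses (mu0_dist : dist_on_ginv g m false mu0) (mu1_dist : dist_on_ginv g m true mu1).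
Hypothesis excess_ge : forall T, - 2 * eps <= conflict_excess m mu0 mu1 chig (fun _ => True) T.
Hypothesis chig_gt0 : 0 < chig.
Hypothesis budget : 9 * (INR r1 + 2 * INR n * eps) <= chig * INR (S k).

Let mu0_ge0 := dist_nonneg _ _ _ _ mu0_dist.
Let mu1_ge0 := dist_nonneg _ _ _ _ mu1_dist.

Definition simulation (s0 : St) (B : DT (nat * nat) St) : RandAlg nat St :=
  simulate m n mu0 mu1 St s0 B whole all_true (fun _ => false) k.

Lemma simulation_success_ge (s0 : St) B (zb : list bool) :
  (forall x, blocks n m x -> (nqueries ask_blocks B x <= r1)%nat) ->
  full_success m n mu0 mu1 St (fun i => nth i zb false) (fun s => ind (f zb s)) B whole all_true - 1/9
  <= success_prob ask_bits f (simulation s0 B) zb.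
Proof.
  intro Hd; unfold simulation; rewrite simulate_success by (auto; discriminate).
  set (z := fun i => nth i zb false).
  pose proof (trunc_success_ge m n mu0 mu1 mu0_ge0 mu1_ge0 St z (fun s => ind (f zb s)) (ind (f zb s0)) B
                (fun s => ind_bounds _) (proj1 (ind_bounds _)) whole all_true k).
  pose proof (markov_conflicts m n mu0 mu1 mu0_ge0 mu1_ge0 St z B whole all_true k).
  pose proof (expected_conflicts_bound m n mu0 mu1 mu0_ge0 mu1_ge0 St z chig eps r1 B
                (proj1 (proj2 mu0_dist)) (proj1 (proj2 mu1_dist)) excess_ge Hd).
  enough (overflow_prob m n mu0 mu1 St z B whole all_true k <= 1/9) by lra.
  assert (0 < INR (S k)) by (apply lt_0_INR; lia).
  apply (Rmult_le_reg_l (chig * INR (S k))); nra.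
Qed.

Lemma simulation_achieves (A : RandAlg (nat * nat) St) :
  is_prob_dist A ->
  (forall p, In p A -> forall x, blocks n m x -> (nqueries ask_blocks (snd p) x <= r1)%nat) ->
  (forall x, blocks n m x -> success_prob ask_blocks (compose n f g) A x >= 1 - 1/3) ->
  achieves ask_bits (bits n) f (4/9) k.
Proof.
  intros [HAge0 HAsum] HAd HAsucc.
  destruct A as [|p0 A']; [simpl in HAsum; lra|].
  set (A := p0 :: A') in *; set (s0 := run ask_blocks (snd p0) nil).
  exists (flat_map (fun p => scale (fst p) (simulation s0 (snd p))) A).
  rewrite Forall_forall in HAge0.
  assert (Hw : weights_ok_within (flat_map (fun p => scale (fst p) (simulation s0 (snd p))) A) k).
  { intros p Hp; apply in_flat_map in Hp as [q [Hq Hp]].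
    apply (weights_ok_scale (fst q) (simulation s0 (snd q)) k (HAge0 q Hq)); auto.
    apply simulate_dist; auto. }
  split; [split|split].
  - apply Forall_forall; intros p Hp; apply (Hw p Hp).
  - rewrite sumR_flat_map, <- HAsum; apply sumR_ext; intros q _.
    unfold simulation; rewrite wsum_scale, (proj2 (simulate_dist m n mu0 mu1 mu0_ge0 mu1_ge0 St _ _ _ _ _ _)).
    ring.
  - intros p Hp x _; apply (Hw p Hp).
  - intros zb Hzb; apply Rle_ge; rewrite success_flat_map.
    pose proof (full_success_ge m n mu0 mu1 mu0_ge0 mu1_ge0 St f g zb A Hzb mu0_dist mu1_dist HAsucc).
    eapply Rle_trans with (sumR (map (fun q => fst q *
      (full_success m n mu0 mu1 St (fun i => nth i zb false) (fun s => ind (f zb s)) (snd q) whole all_true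
       - 1/9)) A)).
    + rewrite (sumR_ext _ (fun q => fst q * full_success m n mu0 mu1 St (fun i => nth i zb false)
                 (fun s => ind (f zb s)) (snd q) whole all_true + (- (1/9)) * fst q)) by (intros; ring).
      rewrite sumR_plus, sumR_scale, HAsum; lra.
    + apply sumR_le; intros q Hq; rewrite success_scale.
      apply Rmult_le_compat_l; [apply HAge0; auto|].
      apply simulation_success_ge; auto.
Qed.

End Simulation.

Theorem theorem3 :
  exists c : R, 0 < c /\
  forall (n m : nat), (0 < n)%nat -> (0 < m)%nat ->
  forall (S : Type) (f : list bool -> S -> Prop) (g : list bool -> bool -> Prop),
    partial_bool g m ->
    (exists x, length x = m /\ ginv g false x) ->
    (exists x, length x = m /\ ginv g true x) ->
    forall chig : R, is_conflict_complexity g m chig ->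
    forall r1 : nat,
      is_Rcomplexity ask_blocks (blocks n m) (compose n f g) (1/3) r1 ->
      exists r2 : nat,
        is_Rcomplexity ask_bits (bits n) f (4/9) r2 /\
        c * INR r2 * chig <= INR r1.
Proof.
  exists (1/9); split; [lra|].
  intros n m _ _ St f g _ Hg0 Hg1 chig Hchi r1 [[A [HA [HAd HAsucc]]] _].
  pose proof (conflict_complexity_ge1 g m chig Hg0 Hg1 Hchi) as Hc1.
  destruct (budget_choice chig r1 n ltac:(lra)) as [k [eps [Heps [Hk Hbudget]]]].
  destruct (near_optimal_pair g m chig eps Hchi Heps) as [mu0 [mu1 [d0 [d1 Hexc]]]].
  pose proof (simulation_achieves n m St f g mu0 mu1 chig eps r1 k d0 d1 Hexc ltac:(lra) Hbudget A
                HA HAd HAsucc) as Hach.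
  destruct (min_nat _ (ex_intro _ k Hach)) as [r2 [Hr2 Hmin]].
  exists r2; split; [split; auto|].
  pose proof (le_INR _ _ (Hmin k Hach)); nra.
Qed.
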